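(* Let $m\geq4$ be an integer, let $G$ be an $m$-free digraph, let $v\in V(G)$ and let $k$ be an integer with $1\leq k\leq m-3$. Put $V_1=\bigcup_{i=1}^{k+1}N_i^+(v)$ and $V_2=V(G)\setminus V_1$. Then the set of edges of $G$ from $V_1$ to $V_2$ equals $E(N^+_{k+1}(v),N^+_{k+2}(v))$, so it has exactly $p_k(v)$ elements, and the number of pairs $(a,b)\in V_1\times V_2$ such that neither $(a,b)$ nor $(b,a)$ is an edge is at least $s_k(v)$.
   Context: All digraphs are finite, without loops and without parallel edges. A digraph is $m$-free if it has no directed cycle of length at most $m$. For a vertex $v$ and $i\geq 0$, $N_i^+(v)$ is the set of vertices $u$ such that the shortest directed path from $v$ to $u$ has length exactly $i$. For $A,B\subseteq V(G)$, $E(A,B)$ is the set of edges $(a,b)$ with $a\in A$, $b\in B$. A directed path $(v_0,\dots,v_k)$ consists of distinct vertices with $(v_i,v_{i+1})$ an edge for each $i$; its length is $k$. It is induced if every edge of $G$ with both ends in $\{v_0,\dots,v_k\}$ is one of the edges $(v_i,v_{i+1})$; it is a shortest induced directed path if it is induced and $v_k\in N_k^+(v_0)$. Let $\mathscr{P}(G)$ be the set of shortest induced directed paths of $G$. For an integer $k\geq1$ and $v\in V(G)$: $P_k(v)$ is the set of triples $(x,y,z)$ of vertices for which there exist vertices $w_1,\dots,w_k$ with $(x,w_1,\dots,w_k,y,z)\in\mathscr{P}(G)$ and $x=v$. $P'_k(v)$ (resp. $Q'_k(v)$) is the set of triples $(x,y,z)$ for which there exist $w_1,\dots,w_k$ with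 $(x,y,w_1,\dots,w_k,z)\in\mathscr{P}(G)$ and $x=v$ (resp. $y=v$). $p_k(v)=|P_k(v)|$, $p'_k(v)=|P'_k(v)|$, $q'_k(v)=|Q'_k(v)|$. For $1\leq k\leq m-3$: $s_k(v)=\sum_{i=k}^{m-3}p'_i(v)+\sum_{i=1}^{k}q'_i(v)$. *)

(* A digraph is a relation [e : rel T] on a finite type [T]
   that is irreflexive (no loops); parallel edges cannot occur. *)
From mathcomp Require Import all_boot.
Set Implicit Arguments. Unset Strict Implicit. Unset Printing Implicit Defensive.

Section Digraphs.
Variables (T : finType) (e : rel T).

(* x :: s is a directed path (distinct vertices, consecutive edges);
   it goes from x to [last x s] and has length [size s]. *)
Definition dpath (x : T) (s : seq T) : bool := path e x s && uniq (x :: s).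

(* m-free: no directed cycle of length at most m.  A directed cycle of length
   l is given by distinct vertices x :: s (l = size s + 1) with consecutive
   edges and the closing edge (last x s, x). *)
Definition mfree (m : nat) : Prop :=
  forall (x : T) (s : seq T), dpath x s -> e (last x s) x -> m < (size s).+1.

(* N_i^+(v) : u such that a shortest directed path from v to u has length i *)
Definition inN (v : T) (i : nat) (u : T) : bool :=
  [exists s : i.-tuple T, dpath v s && (last v s == u)] &&
  [forall j : 'I_i, forall s : j.-tuple T, ~~ (dpath v s && (last v s == u))].

Definition induced (x0 : T) (p : seq T) : bool :=
  [forall i : 'I_(size p), forall j : 'I_(size p),
     e (nth x0 p i) (nth x0 p j) ==> (nat_of_ord j == (nat_of_ord i).+1)].

(* membership in the set of shortest induced directed paths of G *)
Definition sip (p : seq T) : bool :=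
  match p with
  | [::] => false
  | x :: s => [&& dpath x s, induced x p & inN x (size s) (last x s)]
  end.

(* P_k(v), P'_k(v), Q'_k(v) as sets of triples ((x, y), z) *)
Definition Pk (k : nat) (v : T) : {set T * T * T} :=
  [set t : T * T * T | (t.1.1 == v) &&
     [exists w : k.-tuple T, sip (t.1.1 :: (tval w ++ [:: t.1.2; t.2]))]].
Definition Ppk (k : nat) (v : T) : {set T * T * T} :=
  [set t : T * T * T | (t.1.1 == v) &&
     [exists w : k.-tuple T, sip (t.1.1 :: t.1.2 :: (tval w ++ [:: t.2]))]].
Definition Qpk (k : nat) (v : T) : {set T * T * T} :=
  [set t : T * T * T | (t.1.2 == v) &&
     [exists w : k.-tuple T, sip (t.1.1 :: t.1.2 :: (tval w ++ [:: t.2]))]].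

Definition p_ (k : nat) (v : T) : nat := #|Pk k v|.
Definition p'_ (k : nat) (v : T) : nat := #|Ppk k v|.
Definition q'_ (k : nat) (v : T) : nat := #|Qpk k v|.

Definition s_ (m k : nat) (v : T) : nat :=
  (\sum_(k <= i < (m - 3).+1) p'_ i v) + (\sum_(1 <= i < k.+1) q'_ i v).

Definition V1 (k : nat) (v : T) : {set T} :=
  [set u | [exists i : 'I_(k.+2), (0 < nat_of_ord i) && inN v i u]].
Definition V2 (k : nat) (v : T) : {set T} := ~: V1 k v.

Definition Eset (A B : {set T}) : {set T * T} :=
  [set ab : T * T | [&& ab.1 \in A, ab.2 \in B & e ab.1 ab.2]].

Definition Nset (v : T) (i : nat) : {set T} := [set u | inN v i u].

Definition nonadj (A B : {set T}) : {set T * T} :=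
  [set ab : T * T | [&& ab.1 \in A, ab.2 \in B, ~~ e ab.1 ab.2 & ~~ e ab.2 ab.1]].

End Digraphs.

From mathcomp Require Import all_boot zify.
Set Implicit Arguments. Unset Strict Implicit. Unset Printing Implicit Defensive.

(* The proof rests on elementary facts about shortest directed paths: a walk
   of length l from v to u puts u at distance at most l, prefixes and tails of
   shortest paths are shortest, and in an m-free digraph a closed walk has
   length > m, so a shortest path of length < m is induced.  From these:
   - an edge leaves V1 only from layer N_{k+1} to layer N_{k+2} (an edge back
     into v would close a cycle of length <= k+2 <= m), which gives the first
     claim; each such edge (a, b) extends a shortest path to a into a shortest
     induced path to b, so these edges correspond to P_k(v) (second claim);
   - a path of P'_i(v), i >= k, yields the non-adjacent pair (y, z) with y in
     N_1 and z in N_{i+2}; a path x -> v -> ... -> z of Q'_j(v), 1 <= j <= k,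
     yields the non-adjacent pair (z, x) with z in N_{j+1} and x at distance
     >= m.  These pair families are injective images of P'_i(v), Q'_j(v) and
     pairwise disjoint (by the layer of one endpoint), whence s_k(v) is at
     most the number of non-adjacent pairs (third claim). *)

Section ShortestPaths.
Variables (T : finType) (e : rel T).

Lemma inN_path v i u : inN e v i u ->
  exists s, [/\ size s = i, path e v s, uniq (v :: s) & last v s = u].
Proof.
case/andP=> /existsP[s /andP[/andP[ps us] /eqP ls]] _.
by exists (tval s); rewrite size_tuple.
Qed.

Lemma inN_unique v i j u : inN e v i u -> inN e v j u -> i = j.
Proof.
wlog lt_ij : i j / i < j.
  by move=> IH Hi Hj; case: (ltngtP i j) => [/IH|/IH|//]; [apply | move=> /(_ Hj Hi)].
case/andP=> /existsP[s Hs] _ /andP[_ /forallP /(_ (Ordinal lt_ij)) /forallP /(_ s)].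
by rewrite Hs.
Qed.

Lemma inN_0 v u : inN e v 0 u -> u = v.
Proof. by case/inN_path=> [[|? ?] [] //= _ _ <-]. Qed.

(* Any walk from v to u (repeated vertices allowed) bounds the distance of u:
   shorten it to a path and take the least length of a path to u. *)
Lemma walk_dist v s : path e v s ->
  exists2 d, d <= size s & inN e v d (last v s).
Proof.
case/shortenP=> s' ps' us' ss'.
have le_s's : size s' <= size s by apply: uniq_leq_size => //; case/andP: us'.
pose P n := [exists t : n.-tuple T, dpath e v t && (last v t == last v s')].
have Ps' : P (size s') by apply/existsP; exists (in_tuple s'); rewrite /dpath ps' us' eqxx.
have [n Pn min_n] := ex_minnP (ex_intro P _ Ps').
exists n; first exact: leq_trans (min_n _ Ps') le_s's.
apply/andP; split => //; apply/forallP => j; apply/forallP => t; apply/negP => Ht.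
have : n <= j by apply: min_n; apply/existsP; exists t.
by rewrite leqNgt ltn_ord.
Qed.

Lemma subwalk d x s j i : path e x s -> j <= i -> i <= size s ->
  exists t, [/\ path e (nth d (x :: s) j) t,
                last (nth d (x :: s) j) t = nth d (x :: s) i & size t = i - j].
Proof.
elim: s x j i => [|y s IH] x j i.
  by move=> _ le_ji; rewrite leqn0 => /eqP i0; move: le_ji; rewrite i0 leqn0 => /eqP ->;
     exists [::].
move=> /= /andP[exy ps]; case: j => [|j]; case: i => [|i] //.
- by move=> _ _; exists [::].
- move=> _ le_is; have [t [pt lt st]] := IH y 0 i ps (leq0n _) le_is.
  by exists (y :: t); rewrite /= exy pt lt st !subn0.
- by move=> le_ji le_is; apply: IH.
Qed.

(* In an m-free digraph every closed walk, not only every cycle, is longer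
   than m, since a closed walk through w contains a cycle through w. *)
Lemma mfree_closed_walk m w t : mfree e m -> path e w t -> e (last w t) w ->
  m < (size t).+1.
Proof.
move=> mf pt ew; have [d le_dt hd] := walk_dist pt.
have [s [ss ps us ls]] := inN_path hd.
have := mf w s; rewrite /dpath ps us ls => /(_ isT ew); rewrite ss; lia.
Qed.

Lemma shortest_prefix x s : path e x s -> inN e x (size s) (last x s) ->
  forall t, t <= size s -> inN e x t (nth x (x :: s) t).
Proof.
move=> ps hl t le_ts.
have [q [pq lq sq]] := subwalk x ps (leq0n t) le_ts.
have [d le_dq] := walk_dist pq; rewrite lq sq subn0 /= in le_dq * => hd.
have [lt_dt|le_td] := ltnP d t; last by move: hd; have -> : d = t by lia.
have [r [pr lr sr]] := subwalk x ps le_ts (leqnn _).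
have [q' [sq' pq' _ lq']] := inN_path hd.
have pc : path e x (q' ++ r) by rewrite cat_path pq' lq' pr.
have [d' le_d'] := walk_dist pc.
rewrite last_cat lq' lr -[size s]/((size (x :: s)).-1) nth_last /= => hd'.
by have := inN_unique hd' hl; move: le_d'; rewrite size_cat sq' sr; lia.
Qed.

Lemma shortest_tail x y s : path e x (y :: s) -> inN e x (size s).+1 (last y s) ->
  inN e y (size s) (last y s).
Proof.
move=> /= /andP[exy ps] hl.
have [d le_ds hd] := walk_dist ps.
have [lt_ds|le_sd] := ltnP d (size s); last by move: hd; have -> : d = size s by lia.
have [q [sq pq _ lq]] := inN_path hd.
have pc : path e x (y :: q) by rewrite /= exy pq.
have [d' le_d'] := walk_dist pc; rewrite /= lq => hd'.
by have := inN_unique hd' hl; move: le_d'; rewrite /= sq; lia.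
Qed.

Lemma inducedP x0 p i j : induced e x0 p -> i < size p -> j < size p ->
  e (nth x0 p i) (nth x0 p j) -> j = i.+1.
Proof.
move=> /forallP ind lt_ip lt_jp eij.
by move: ind => /(_ (Ordinal lt_ip)) /forallP /(_ (Ordinal lt_jp)) /implyP /(_ eij) /eqP.
Qed.

(* In an m-free digraph a shortest path of length < m is induced: a backward
   chord closes a cycle of length <= m, and a forward chord skipping a vertex
   would give a shorter path. *)
Lemma shortest_induced m x s : mfree e m -> path e x s ->
  inN e x (size s) (last x s) -> size s < m -> induced e x (x :: s).
Proof.
move=> mf ps hl lt_sm; apply/forallP => a; apply/forallP => b; apply/implyP => eab.
have le_as : a <= size s by have := ltn_ord a.
have le_bs : b <= size s by have := ltn_ord b.
have [le_ba|lt_ab] := leqP b a.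
  have [t [pt lt st]] := subwalk x ps le_ba le_as.
  by have := mfree_closed_walk mf pt; rewrite lt st => /(_ eab); lia.
have [q [sq pq _ lq]] := inN_path (shortest_prefix ps hl le_as).
have pc : path e x (rcons q (nth x (x :: s) b)) by rewrite rcons_path pq lq eab.
have [d le_d] := walk_dist pc; rewrite last_rcons => hd.
have := inN_unique hd (shortest_prefix ps hl le_bs).
by move: le_d; rewrite size_rcons sq => ? ?; apply/eqP; lia.
Qed.

End ShortestPaths.

Lemma bigcup_natP (X : finType) (F : nat -> {set X}) lo hi x :
  x \in \bigcup_(lo <= i < hi) F i -> exists2 i, lo <= i < hi & x \in F i.
Proof.
elim: hi => [|hi IH]; first by rewrite big_geq // in_set0.
have [le_lo_hi|lt_hi_lo] := leqP lo hi; last by rewrite big_geq ?in_set0.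
rewrite big_nat_recr //= in_setU => /orP[/IH[i /andP[lo_i i_hi] xi] | x_hi].
  by exists i; rewrite // lo_i ltnS ltnW.
by exists hi; rewrite // le_lo_hi /=.
Qed.

Lemma card_bigcup_nat (X : finType) (F : nat -> {set X}) lo hi :
  (forall i j, i != j -> [disjoint F i & F j]) ->
  #|\bigcup_(lo <= i < hi) F i| = \sum_(lo <= i < hi) #|F i|.
Proof.
move=> disjF; elim: hi => [|hi IH]; first by rewrite !big_geq // cards0.
have [le_lo_hi|lt_hi_lo] := leqP lo hi; last by rewrite !big_geq ?cards0.
rewrite !big_nat_recr //= cardsU IH disjoint_setI0 ?cards0 ?subn0 //.
rewrite disjoint_subset; apply/subsetP => x /bigcup_natP[i /andP[_ i_hi] xi].
by rewrite inE (disjointFr (disjF i hi _) xi) // neq_ltn i_hi.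
Qed.

Section Layers.
Variables (T : finType) (e : rel T).

Lemma in_Eset (A B : {set T}) a b :
  ((a, b) \in Eset e A B) = [&& a \in A, b \in B & e a b].
Proof. by rewrite inE. Qed.

Lemma in_nonadj (A B : {set T}) a b :
  ((a, b) \in nonadj e A B) = [&& a \in A, b \in B, ~~ e a b & ~~ e b a].
Proof. by rewrite inE. Qed.

Lemma in_Nset v i u : (u \in Nset e v i) = inN e v i u.
Proof. by rewrite inE. Qed.

Lemma in_V2 k v u : (u \in V2 e k v) = (u \notin V1 e k v).
Proof. by rewrite inE. Qed.

Lemma V1P k v u :
  reflect (exists2 d, 0 < d <= k.+1 & inN e v d u) (u \in V1 e k v).
Proof.
rewrite inE; apply: (iffP existsP) => [[i /andP[i0 hi]] | [d /andP[d0 dk] hd]].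
  by exists (i : nat); rewrite // i0 -ltnS ltn_ord.
by exists (Ordinal (dk : d < k.+2)); rewrite /= d0 hd.
Qed.

Lemma far_V2 k v d u : k.+1 < d -> inN e v d u -> u \in V2 e k v.
Proof.
move=> lt_kd hd; rewrite in_V2; apply/V1P => -[d' /andP[_ le_d'k] hd'].
by have := inN_unique hd hd'; lia.
Qed.

Lemma edge_dist v d a b : inN e v d a -> e a b ->
  exists2 d', d' <= d.+1 & inN e v d' b.
Proof.
case/inN_path=> q [sq pq _ lq] eab.
have pqb : path e v (rcons q b) by rewrite rcons_path pq lq eab.
have [d' le_d' hd'] := walk_dist pqb.
by exists d'; [rewrite -sq -(size_rcons q b) | rewrite -(last_rcons v q b)].
Qed.

Lemma back_edge_far m v d a : mfree e m -> inN e v d a -> e a v -> m <= d.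
Proof.
move=> mf /inN_path[q [sq pq _ lq]] eav.
by have := mfree_closed_walk mf pq; rewrite lq sq => /(_ eav).
Qed.

Lemma shortest_rcons_new v s b : path e v s -> inN e v (size s) (last v s) ->
  inN e v (size s).+1 b -> b \notin v :: s.
Proof.
move=> ps hl hb; apply/negP => b_in.
have le_is : index b (v :: s) <= size s by rewrite -ltnS index_mem.
have := shortest_prefix ps hl le_is; rewrite nth_index // => hi.
by have := inN_unique hi hb; move: le_is; lia.
Qed.

Lemma Ppk_layers i v x y z : ((x, y), z) \in Ppk e i v ->
  [/\ x = v, inN e v 1 y, inN e v i.+2 z & (0 < i -> ~~ e y z && ~~ e z y)].
Proof.
rewrite inE /= => /andP[/eqP-> /existsP[w /and3P[/andP[ps _] ind hl]]].
have sz : size (w ++ [:: z]) = i.+1 by rewrite size_cat size_tuple addn1.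
have nth_z : nth v (v :: y :: w ++ [:: z]) i.+2 = z.
  by rewrite /= nth_cat size_tuple ltnn subnn.
split=> //; first by apply: (shortest_prefix ps hl).
  by move: hl; rewrite sz last_cat.
move=> i0; have lt1 : 1 < size (v :: y :: w ++ [:: z]) by rewrite /= sz.
have lti2 : i.+2 < size (v :: y :: w ++ [:: z]) by rewrite /= sz.
apply/andP; split; apply/negP => E.
  by have := inducedP ind lt1 lti2; rewrite nth_z => /(_ E) [i0E]; rewrite i0E in i0.
by have := inducedP ind lti2 lt1; rewrite nth_z => /(_ E).
Qed.

Lemma Qpk_layers i v x y z : ((x, y), z) \in Qpk e i v ->
  [/\ y = v, e x v, inN e v i.+1 z & ~~ e x z && ~~ e z x].
Proof.
rewrite inE /= => /andP[/eqP-> /existsP[w /and3P[/andP[ps _] ind hl]]].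
have sz : size (w ++ [:: z]) = i.+1 by rewrite size_cat size_tuple addn1.
have nth_z : nth x (x :: v :: w ++ [:: z]) i.+2 = z.
  by rewrite /= nth_cat size_tuple ltnn subnn.
split=> //; first by case/andP: ps.
  by have := shortest_tail ps; rewrite sz last_cat; apply; move: hl; rewrite sz last_cat.
have lt0 : 0 < size (x :: v :: w ++ [:: z]) by [].
have lti2 : i.+2 < size (x :: v :: w ++ [:: z]) by rewrite /= sz.
apply/andP; split; apply/negP => E.
  by have := inducedP ind lt0 lti2; rewrite nth_z => /(_ E).
by have := inducedP ind lti2 lt0; rewrite nth_z => /(_ E).
Qed.

End Layers.

Section Cut.
Variables (T : finType) (e : rel T) (m : nat).
Hypothesis mf : mfree e m.

Lemma cut_edges k v : k.+2 <= m ->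
  Eset e (V1 e k v) (V2 e k v) = Eset e (Nset e v k.+1) (Nset e v k.+2).
Proof.
move=> km; apply/setP => -[a b]; rewrite !in_Eset !in_Nset; apply/idP/idP.
  case/and3P=> /V1P[d /andP[d0 dk] hd] b_out eab.
  have [d' le_d' hd'] := edge_dist hd eab.
  have [d'0|d'_pos] := posnP d'.
    move: hd'; rewrite d'0 => /inN_0 bv; rewrite bv in eab.
    by have := back_edge_far mf hd eab; lia.
  have [le_d'k|lt_kd'] := leqP d' k.+1.
    by move: b_out; rewrite in_V2; case/V1P; exists d'; rewrite ?d'_pos.
  have dE : d = k.+1 by lia.
  have d'E : d' = k.+2 by lia.
  by move: hd hd'; rewrite dE d'E eab => -> ->.
case/and3P=> ha hb eab; rewrite eab (far_V2 _ hb) // !andbT.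
by apply/V1P; exists k.+1; rewrite ?leqnn.
Qed.

(* The triples of P_k(v) are exactly the edges from N_{k+1} to N_{k+2}
   prefixed by v: such an edge extends a shortest path into a shortest path
   of length k+2 < m, which is induced. *)
Lemma Pk_edges k v : k.+3 <= m ->
  Pk e k v = [set (v, ab.1, ab.2) | ab in Eset e (Nset e v k.+1) (Nset e v k.+2)].
Proof.
move=> km; apply/setP => -[[x y] z]; apply/idP/imsetP.
  rewrite inE /= => /andP[/eqP-> /existsP[w /and3P[/andP[ps _] _ hl]]].
  have sz : size (w ++ [:: y; z]) = k.+2 by rewrite size_cat size_tuple addn2.
  have hy : inN e v k.+1 y.
    by have := shortest_prefix ps hl (t := k.+1); rewrite sz /= nth_cat size_tuple
      ltnn subnn; apply.
  have hz : inN e v k.+2 z by move: hl; rewrite sz last_cat.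
  have eyz : e y z by move: ps; rewrite cat_path => /andP[_ /= /and3P[_ ->]].
  by exists (y, z); rewrite // in_Eset !in_Nset hy hz eyz.
case=> -[a b]; rewrite in_Eset !in_Nset => /and3P[ha hb eab] [-> -> ->].
rewrite inE /= eqxx /=; apply/existsP.
have [s0 [ss ps us ls]] := inN_path ha.
case/lastP: s0 ss ps us ls => [|w c] //; rewrite size_rcons => -[sw] ps us.
rewrite last_rcons => ca; rewrite {c}ca in ps us.
exists (Tuple (introT eqP sw)); rewrite /= -cat_rcons.
set s := rcons w a in ps us *.
have ss : size s = k.+1 by rewrite size_rcons sw.
have hl : inN e v (size s) (last v s) by rewrite ss last_rcons.
have psb : path e v (rcons s b) by rewrite rcons_path ps last_rcons eab.
have hlb : inN e v (size (rcons s b)) (last v (rcons s b)).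
  by rewrite size_rcons ss last_rcons.
rewrite cats1 /sip /dpath psb hlb (shortest_induced mf psb hlb); last first.
  by rewrite size_rcons ss.
by rewrite -rcons_cons rcons_uniq us (shortest_rcons_new ps hl) // ss.
Qed.

Lemma card_Pk k v : k.+3 <= m ->
  p_ e k v = #|Eset e (Nset e v k.+1) (Nset e v k.+2)|.
Proof.
by move=> km; rewrite /p_ Pk_edges // card_imset // => -[a b] [c d] /= [-> ->].
Qed.

End Cut.

Section Counting.
Variables (T : finType) (e : rel T).

Definition fwd_pairs i v : {set T * T} := [set (t.1.2, t.2) | t in Ppk e i v].
Definition back_pairs i v : {set T * T} := [set (t.2, t.1.1) | t in Qpk e i v].

(* Both maps are injective since the vertex v is fixed by the path family. *)
Lemma card_fwd_pairs i v : #|fwd_pairs i v| = p'_ e i v.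
Proof.
apply: card_in_imset => -[[x y] z] [[x' y'] z'] /Ppk_layers[-> _ _ _].
by case/Ppk_layers=> -> _ _ _ /= [-> ->].
Qed.

Lemma card_back_pairs i v : #|back_pairs i v| = q'_ e i v.
Proof.
apply: card_in_imset => -[[x y] z] [[x' y'] z'] /Qpk_layers[-> _ _ _].
by case/Qpk_layers=> -> _ _ _ /= [-> ->].
Qed.

(* The families are pairwise disjoint: in fwd_pairs i the second vertex is
   at distance i+2, in back_pairs i the first is at distance i+1, while in
   fwd_pairs the first is at distance 1. *)
Lemma fwd_pairs_disjoint v i j : i != j -> [disjoint fwd_pairs i v & fwd_pairs j v].
Proof.
move=> ij; rewrite disjoint_subset; apply/subsetP.
move=> _ /imsetP[[[x y] z] /Ppk_layers[_ _ hz _] ->].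
rewrite inE; apply/negP => /imsetP[[[x' y'] z'] /Ppk_layers[_ _ hz' _] [_ zE]].
by rewrite zE in hz; have := inN_unique hz hz'; move: ij => /eqP; lia.
Qed.

Lemma back_pairs_disjoint v i j : i != j -> [disjoint back_pairs i v & back_pairs j v].
Proof.
move=> ij; rewrite disjoint_subset; apply/subsetP.
move=> _ /imsetP[[[x y] z] /Qpk_layers[_ _ hz _] ->].
rewrite inE; apply/negP => /imsetP[[[x' y'] z'] /Qpk_layers[_ _ hz' _] [zE _]].
by rewrite zE in hz; have := inN_unique hz hz'; move: ij => /eqP; lia.
Qed.

Lemma fwd_back_disjoint v i j : 0 < j -> [disjoint fwd_pairs i v & back_pairs j v].
Proof.
move=> j0; rewrite disjoint_subset; apply/subsetP.
move=> _ /imsetP[[[x y] z] /Ppk_layers[_ hy _ _] ->].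
rewrite inE; apply/negP => /imsetP[[[x' y'] z'] /Qpk_layers[_ _ hz' _] [yE _]].
by rewrite yE in hy; have := inN_unique hy hz'; lia.
Qed.

Lemma fwd_pairs_nonadj k i v : 0 < k <= i ->
  fwd_pairs i v \subset nonadj e (V1 e k v) (V2 e k v).
Proof.
case/andP=> k0 ki; apply/subsetP => _ /imsetP[[[x y] z] /Ppk_layers[_ hy hz nyz] ->].
rewrite in_nonadj (far_V2 _ hz) ?nyz ?andbT; last by lia.
  by apply/V1P; exists 1.
by apply: leq_trans ki.
Qed.

(* For 1 <= j <= k the backward pairs are non-adjacent pairs of V1 x V2; the
   vertex x is in V2 because it is at distance >= m > k+1. *)
Lemma back_pairs_nonadj m k j v : mfree e m -> k.+2 <= m -> 0 < j <= k ->
  back_pairs j v \subset nonadj e (V1 e k v) (V2 e k v).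
Proof.
move=> mf km /andP[j0 jk]; apply/subsetP => _ /imsetP[[[x y] z] /Qpk_layers[_ exv hz nxz] ->].
case/andP: nxz => nxz nzx; rewrite in_nonadj nxz nzx !andbT; apply/andP; split.
  by apply/V1P; exists j.+1.
rewrite in_V2; apply/V1P => -[d /andP[_ dk] hx].
by have := back_edge_far mf hx exv; lia.
Qed.

Lemma nonadj_lower_bound m k v : mfree e m -> 0 < k -> k.+2 <= m ->
  s_ e m k v <= #|nonadj e (V1 e k v) (V2 e k v)|.
Proof.
move=> mf k0 km.
set UA := \bigcup_(k <= i < (m - 3).+1) fwd_pairs i v.
set UB := \bigcup_(1 <= j < k.+1) back_pairs j v.
have cardA : #|UA| = \sum_(k <= i < (m - 3).+1) p'_ e i v.
  rewrite card_bigcup_nat; last exact: fwd_pairs_disjoint.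
  by apply: eq_bigr => i _; rewrite card_fwd_pairs.
have cardB : #|UB| = \sum_(1 <= j < k.+1) q'_ e j v.
  rewrite card_bigcup_nat; last exact: back_pairs_disjoint.
  by apply: eq_bigr => j _; rewrite card_back_pairs.
have disjAB : UA :&: UB = set0.
  apply/disjoint_setI0; rewrite disjoint_subset; apply/subsetP => ab.
  case/bigcup_natP=> i _ ab_i; rewrite inE; apply/negP => /bigcup_natP[j /andP[j0 _] ab_j].
  by rewrite (disjointFr (fwd_back_disjoint v i j0) ab_i) in ab_j.
rewrite /s_ -cardA -cardB.
have -> : #|UA| + #|UB| = #|UA :|: UB| by rewrite cardsU disjAB cards0 subn0.
apply/subset_leq_card/subsetP => ab /setUP[|] /bigcup_natP[i /andP[lo_i i_hi] ab_i].
  by apply: subsetP ab ab_i; apply: fwd_pairs_nonadj; rewrite k0.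
by apply: subsetP ab ab_i; apply: back_pairs_nonadj mf km _; rewrite lo_i -ltnS.
Qed.

End Counting.

(* The theorem; loops are already excluded by m-freeness. *)
Theorem mainTheorem7 (T : finType) (e : rel T) (m : nat) (v : T) (k : nat) :
  irreflexive e -> 4 <= m -> mfree e m -> 1 <= k -> k <= m - 3 ->
  Eset e (V1 e k v) (V2 e k v) = Eset e (Nset e v k.+1) (Nset e v k.+2) /\
  #|Eset e (V1 e k v) (V2 e k v)| = p_ e k v /\
  s_ e m k v <= #|nonadj e (V1 e k v) (V2 e k v)|.
Proof.
move=> _ m4 mf k0 km.
have k3m : k.+3 <= m by lia.
have cut := cut_edges mf v (ltnW k3m).
split; first exact: cut.
split; first by rewrite cut (card_Pk mf v k3m).
exact: nonadj_lower_bound mf k0 (ltnW k3m).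
Qed.
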